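(* In the general setting described in the context, fix $n$ and let $\{y_k:k=1,\dots,L\}\subseteq M$ with weights $\tau_k>0$ satisfy, for some $A,B>0$, $A\|p\|_2^2\le\sum_{k=1}^L|p(y_k)|^2\tau_k\le B\|p\|_2^2$ for all $p\in\mathcal P_n$. For $f\in C(M)$ let $q=\operatorname{argmin}_{p\in\mathcal P_n}\sum_{k=1}^L|f(y_k)-p(y_k)|^2\tau_k$. Then $$\|f-q\|_2\le\big(1+(B/A)^2\big)^{1/2}\|f-P_nf\|_\infty.$$
   Context: $M$ is a compact space, $\mu$ a probability measure on $M$, $\|\cdot\|_2$ the $L^2(M,\mu)$-norm. $\{\phi_k:k\in\mathbb N\}$ is an orthonormal basis of $L^2(M,\mu)$ of continuous functions with $\phi_1\equiv1$. $(\lambda_k)$ is non-decreasing, $\lambda_k\ge0$, $\lambda_k\to\infty$. $\mathcal P_n=\operatorname{span}\{\phi_k:\lambda_k\le n\}$ and $P_n$ is the orthogonal projection of $L^2(M,\mu)$ onto $\mathcal P_n$. *)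

From HB Require Import structures.
From mathcomp Require Import all_boot all_order all_algebra.
From mathcomp Require Import all_classical all_reals all_analysis.
Set Implicit Arguments. Unset Strict Implicit. Unset Printing Implicit Defensive.
Import Order.TTheory GRing.Theory Num.Theory numFieldNormedType.Exports.
Local Open Scope classical_set_scope.
Local Open Scope ring_scope.

Definition Borel (M : ptopologicalType) := g_sigma_algebraType (@open M).

Section Defs.
Context {R : realType} {M : ptopologicalType}.

Definition Pspace (phi : nat -> M -> R) (lambda : nat -> R) (n : R) (p : M -> R) :=
  exists (N : nat) (c : nat -> R),
    p = (fun x => \sum_(k < N | lambda k <= n) c k * phi k x).

Definition orthonormal_sys (mu : {measure set (Borel M) -> \bar R}) (phi : nat -> M -> R) :=
  forall j k : nat, (\int[mu]_x (phi j x * phi k x)%:E = ((j == k)%:R)%:E)%E.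

Definition complete_system (mu : {measure set (Borel M) -> \bar R}) (phi : nat -> M -> R) :=
  forall g : Borel M -> R, measurable_fun setT g ->
    (\int[mu]_x ((g x) ^+ 2)%:E < +oo)%E ->
    (forall k, (\int[mu]_x (g x * phi k x)%:E = 0)%E) ->
    {ae mu, forall x, g x = 0}.

Definition supnorm (g : M -> R) : R := sup (range (fun x => `|g x|)).

Definition L2norm (mu : {measure set (Borel M) -> \bar R}) (g : M -> R) : \bar R :=
  Lnorm mu 2%:E (EFin \o (g : Borel M -> R)).

End Defs.

From HB Require Import structures.
From mathcomp Require Import all_boot all_order all_algebra.
From mathcomp Require Import all_classical all_reals all_analysis.
From mathcomp Require Import measurable_realfun ring lra.
Set Implicit Arguments. Unset Strict Implicit. Unset Printing Implicit Defensive.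
Import Order.TTheory GRing.Theory Num.Theory numFieldNormedType.Exports.
Local Open Scope classical_set_scope.
Local Open Scope ring_scope.

(* With g := f - P_n f and r := q - P_n f in P_n, the L^2-orthogonality of g to
   P_n gives ||f - q||_2^2 = ||g||_2^2 + ||r||_2^2, and ||g||_2 <= ||g||_oo since
   mu is a probability.  The discrete least-squares residual f - q is orthogonal
   to P_n for the weighted point evaluations, so the discrete norm of r is at
   most that of g, hence at most ||g||_oo^2 sum_k tau_k <= B ||g||_oo^2 (the
   upper Marcinkiewicz-Zygmund bound applied to the constant 1 = phi 0).  The
   lower bound then gives ||r||_2^2 <= (B/A) ||g||_oo^2 <= (B/A)^2 ||g||_oo^2.
   If n < lambda 0, then P_n = {0} and r = 0. *)


Lemma quadratic_ge0_coef1_eq0 (R : realFieldType) (a b : R) :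
  (forall t, 0 <= t ^+ 2 * a - 2 * t * b) -> b = 0.
Proof.
move=> hq; pose t := b / (`|a| + 1).
have a1_gt0 : 0 < `|a| + 1 by rewrite ltr_pwDr.
have tE : b = t * (`|a| + 1) by rewrite mulfVK // gt_eqF.
have : t ^+ 2 * (`|a| + 2) <= 0.
  have := hq t; have := ler_norm a; rewrite tE; nra.
rewrite pmulr_lle0 ?ltr_pwDr // => t2_le0.
have t0 : t = 0 by apply/eqP; rewrite -sqrf_eq0 eq_le t2_le0 sqr_ge0.
by rewrite tE t0 mul0r.
Qed.

Section weighted_least_squares.
Context {R : realFieldType} {T : Type} {L : nat} (y : 'I_L -> T) (tau : 'I_L -> R).
Hypothesis tau_ge0 : forall k, 0 <= tau k.

Definition wdot (u v : T -> R) := \sum_(k < L) u (y k) * v (y k) * tau k.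

Definition wnorm2 (u : T -> R) := \sum_(k < L) `|u (y k)| ^+ 2 * tau k.

Lemma wnorm2_ge0 u : 0 <= wnorm2 u.
Proof. by apply: sumr_ge0 => k _; rewrite mulr_ge0 ?sqr_ge0. Qed.

Lemma wnorm2_add_scale u v t :
  wnorm2 (fun x => u x + t * v x) = wnorm2 u + 2 * t * wdot u v + t ^+ 2 * wnorm2 v.
Proof.
rewrite /wnorm2 /wdot !mulr_sumr -!big_split /=; apply: eq_bigr => k _.
rewrite !real_normK ?num_real //; ring.
Qed.

Lemma wnorm2_le u c : (forall k, `|u (y k)| <= c) -> wnorm2 u <= c ^+ 2 * \sum_(k < L) tau k.
Proof.
move=> u_le; rewrite mulr_sumr; apply: ler_sum => k _.
by rewrite ler_wpM2r // lerXn2r ?nnegrE // (le_trans _ (u_le k)).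
Qed.

Variable S : (T -> R) -> Prop.
Hypothesis S_lin : forall a b p1 p2, S p1 -> S p2 -> S (fun x => a * p1 x + b * p2 x).
Variables f q : T -> R.
Hypotheses (Sq : S q) (q_min : forall p, S p -> wnorm2 (f \- q) <= wnorm2 (f \- p)).

Lemma wlsq_orthogonal p : S p -> wdot (f \- q) p = 0.
Proof.
move=> Sp; apply: (@quadratic_ge0_coef1_eq0 _ (wnorm2 p)) => t.
have := q_min (S_lin 1 t Sq Sp).
have -> : f \- (fun x => 1 * q x + t * p x) = fun x => (f \- q) x + (- t) * p x.
  by apply/funext => x /=; ring.
rewrite wnorm2_add_scale -subr_ge0; congr (0 <= _); ring.
Qed.

Lemma wlsq_wnorm2_le p : S p -> wnorm2 (q \- p) <= wnorm2 (f \- p).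
Proof.
move=> Sp; have Sqp : S (q \- p).
  have -> : q \- p = fun x => 1 * q x + (-1) * p x by apply/funext => x /=; ring.
  exact: S_lin.
have -> : f \- p = fun x => (f \- q) x + 1 * (q \- p) x by apply/funext => x /=; ring.
rewrite wnorm2_add_scale wlsq_orthogonal // mulr0 addr0 expr1n mul1r.
by rewrite lerDr wnorm2_ge0.
Qed.

End weighted_least_squares.

Section continuous_functions_on_compact.
Context {R : realType} {M : ptopologicalType}.

Lemma continuous_measurable (h : M -> R) : continuous h ->
  measurable_fun [set: Borel M] (h : Borel M -> R).
Proof.
move=> /continuousP h_open; apply: (measurability _ (RGenOpens.measurableE R)).
move=> _ [_ [a [b ->] <-]]; rewrite setTI.
by apply: sub_gen_smallest; exact/h_open/interval_open.
Qed.

Lemma continuous_sqr (h : M -> R) : continuous h -> continuous (fun x => h x ^+ 2).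
Proof.
move=> h_cont; have -> : (fun x => h x ^+ 2) = h \* h by apply/funext => x; rewrite expr2.
by move=> x; exact: (continuousM (h_cont x) (h_cont x)).
Qed.

Hypothesis M_compact : compact [set: M].

Lemma continuous_bounded (h : M -> R) : continuous h -> exists C, forall x, `|h x| <= C.
Proof.
move=> h_cont.
have /compact_bounded[C [_ C_bound]] : compact (h @` [set: M]).
  by apply: continuous_compact => //; exact: continuous_subspaceT.
by exists (C + 1) => x; apply: (C_bound (C + 1)); [rewrite ltrDl | exists x].
Qed.

Lemma le_supnorm (h : M -> R) x : continuous h -> `|h x| <= supnorm h.
Proof.
move=> /continuous_bounded[C C_bound]; apply: sup_upper_bound; last by exists x.
by split; [exists `|h x|, x | exists C => _ [z _ <-]].
Qed.

Variable mu : probability (Borel M) R.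

Lemma continuous_integrable (h : M -> R) : continuous h ->
  mu.-integrable [set: Borel M] (EFin \o h).
Proof.
move=> h_cont; apply: measurable_bounded_integrable => //.
- exact: le_lt_trans (probability_le1 mu measurableT) (ltry 1).
- exact: continuous_measurable.
have [C C_bound] := continuous_bounded h_cont.
exists C; split; first exact: num_real.
by move=> m /ltW Cm x _ /=; exact: le_trans (C_bound x) Cm.
Qed.

Lemma continuous_integralE (h : M -> R) : continuous h ->
  (\int[mu]_x (h x)%:E = (\int[mu]_x h x)%:E)%E.
Proof.
move=> h_cont; rewrite fineK //.
exact/integrable_fin_num/continuous_integrable.
Qed.

Lemma Rintegral_cst_probability (c : R) : \int[mu]_x c = c.
Proof.
rewrite Rintegral_cst // (_ : fine _ = 1) ?mulr1 //.
exact: (f_equal fine (probability_setT mu)).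
Qed.

Lemma Rintegral_sqr_le (h : M -> R) c : continuous h -> (forall x, `|h x| <= c) ->
  \int[mu]_x (h x ^+ 2) <= c ^+ 2.
Proof.
move=> h_cont h_le; rewrite -[leRHS]Rintegral_cst_probability.
apply: le_Rintegral => //.
- exact/continuous_integrable/continuous_sqr.
- exact/continuous_integrable/cst_continuous.
move=> x _; rewrite -real_normK ?num_real // lerXn2r ?nnegrE //.
exact: le_trans (h_le x).
Qed.

Lemma Rintegral_sqrB_orthogonal (g r : M -> R) : continuous g -> continuous r ->
  \int[mu]_x (g x * r x) = 0 ->
  \int[mu]_x ((g x - r x) ^+ 2) = \int[mu]_x (g x ^+ 2) + \int[mu]_x (r x ^+ 2).
Proof.
move=> g_cont r_cont gr0.
have gr_cont : continuous (g \* r) by move=> x; exact: (continuousM (g_cont x) (r_cont x)).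
rewrite (@eq_Rintegral _ _ _ mu _ (fun x => (g x ^+ 2 + r x ^+ 2) - 2 * (g x * r x)));
  last by move=> x _; ring.
rewrite RintegralB //; first last.
- by apply: continuous_integrable => x; apply: cvgM; [exact: cvg_cst | exact: gr_cont].
- by apply: continuous_integrable => x; apply: cvgD; exact: continuous_sqr.
rewrite RintegralD ?RintegralZl ?gr0 ?mulr0 ?subr0 //; first exact: continuous_integrable.
all: exact/continuous_integrable/continuous_sqr.
Qed.

Lemma L2norm_le (h : M -> R) c : continuous h -> 0 <= c ->
  \int[mu]_x (h x ^+ 2) <= c ^+ 2 -> (L2norm mu h <= c%:E)%E.
Proof.
move=> h_cont c_ge0 int_le; rewrite /L2norm unlock /=.
under eq_integral => x _ do rewrite powR_mulrn // real_normK ?num_real //.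
rewrite continuous_integralE; last exact: continuous_sqr.
rewrite poweR_EFin powR12_sqrt ?lee_fin; last by apply: Rintegral_ge0 => x _; exact: sqr_ge0.
by rewrite -(ger0_norm c_ge0) -sqrtr_sqr ler_sqrt ?sqr_ge0.
Qed.

End continuous_functions_on_compact.

Section Pspace.
Context {R : realType} {M : ptopologicalType}.
Variables (phi : nat -> M -> R) (lambda : nat -> R) (n : R).

Lemma Pspace_continuous : (forall k, continuous (phi k)) ->
  forall p, Pspace phi lambda n p -> continuous p.
Proof.
move=> phi_cont p [N [c ->]].
apply: (@continuous_big _ _ +%R 0 _ _ _ _ (fun (k : 'I_N) x => c k * phi k x)).
  exact: add_continuous.
by move=> k _ x; apply: cvgM; [exact: cvg_cst | exact: phi_cont].
Qed.

Lemma Pspace_lin a b p1 p2 : Pspace phi lambda n p1 -> Pspace phi lambda n p2 ->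
  Pspace phi lambda n (fun x => a * p1 x + b * p2 x).
Proof.
move=> [N1 [c1 ->]] [N2 [c2 ->]]; pose N := maxn N1 N2.
exists N, (fun k => a * (c1 k *+ (k < N1)%N) + b * (c2 k *+ (k < N2)%N)).
apply/funext => x; pose P k := lambda k <= n.
rewrite (big_ord_widen_cond N P (fun k => c1 k * phi k x)) ?leq_maxl //.
rewrite (big_ord_widen_cond N P (fun k => c2 k * phi k x)) ?leq_maxr //.
rewrite !big_mkcondr !mulr_sumr -big_split /=; apply: eq_bigr => k _.
by case: (k < N1)%N; case: (k < N2)%N; rewrite /= ?mulr0n ?mulr1n; ring.
Qed.

Lemma Pspace_cst1 : phi 0%N = cst 1 -> lambda 0%N <= n -> Pspace phi lambda n (cst 1).
Proof.
move=> phi0 lambda0_le; exists 1%N, (fun _ => 1); apply/funext => x.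
by rewrite big_mkcond big_ord1 lambda0_le mul1r phi0.
Qed.

Lemma Pspace_eq0 p : {homo lambda : a b / (a <= b)%N >-> a <= b} -> n < lambda 0%N ->
  Pspace phi lambda n p -> p = cst 0.
Proof.
move=> lambda_mono n_lt [N [c ->]]; apply/funext => x; rewrite big_pred0 // => k.
by apply/negbTE; rewrite -ltNge (lt_le_trans n_lt) ?lambda_mono.
Qed.

End Pspace.

Section Marcinkiewicz_Zygmund.
Context {R : realType} {M : ptopologicalType}.
Variables (mu : probability (Borel M) R) (P : (M -> R) -> Prop).
Variables (L : nat) (y : 'I_L -> M) (tau : 'I_L -> R) (A B : R).
Hypotheses (M_compact : compact [set: M]) (A_gt0 : 0 < A).
Hypothesis P_cont : forall p, P p -> continuous p.
Hypothesis MZ : forall p, P p ->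
  (A%:E * \int[mu]_x ((p x) ^+ 2)%:E <= (\sum_(k < L) `|p (y k)| ^+ 2 * tau k)%:E)%E /\
  ((\sum_(k < L) `|p (y k)| ^+ 2 * tau k)%:E <= B%:E * \int[mu]_x ((p x) ^+ 2)%:E)%E.

Lemma MZ_Rintegral p : P p ->
  A * \int[mu]_x (p x ^+ 2) <= wnorm2 y tau p <= B * \int[mu]_x (p x ^+ 2).
Proof.
move=> Pp; have [] := MZ Pp.
rewrite (continuous_integralE M_compact); last exact/continuous_sqr/P_cont.
by rewrite -!EFinM !lee_fin => lower upper; apply/andP.
Qed.

Lemma MZ_sum_weights : P (cst 1) -> A <= \sum_(k < L) tau k <= B.
Proof.
move=> P1; have := MZ_Rintegral P1.
rewrite /wnorm2 /cst /= expr1n Rintegral_cst_probability !mulr1 normr1 expr1n.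
by under eq_bigr => k _ do rewrite mul1r.
Qed.

Lemma MZ_Rintegral_sqr_le p c : P (cst 1) -> P p ->
  wnorm2 y tau p <= c ^+ 2 * \sum_(k < L) tau k ->
  \int[mu]_x (p x ^+ 2) <= c ^+ 2 * (B / A) ^+ 2.
Proof.
move=> P1 Pp p_le; have /andP[A_le sum_le] := MZ_sum_weights P1.
have BA_ge1 : 1 <= B / A by rewrite ler_pdivlMr // mul1r (le_trans A_le).
have int_le : \int[mu]_x (p x ^+ 2) <= c ^+ 2 * (B / A).
  rewrite -(ler_pM2l A_gt0) mulrCA [A * (B / A)]mulrC divfK ?gt_eqF //.
  have /andP[lower _] := MZ_Rintegral Pp.
  by rewrite (le_trans lower) // (le_trans p_le) // ler_wpM2l ?sqr_ge0.
by rewrite (le_trans int_le) // ler_wpM2l ?sqr_ge0 // expr2 ler_peMl // (le_trans _ BA_ge1).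
Qed.

End Marcinkiewicz_Zygmund.

Theorem corollary3p4 (R : realType) (M : ptopologicalType)
  (mu : probability (Borel M) R)
  (phi : nat -> M -> R) (lambda : nat -> R)
  (hM : compact [set: M])
  (hcont : forall k, continuous (phi k))
  (hON : orthonormal_sys mu phi)
  (hcomplete : complete_system mu phi)
  (hphi0 : phi 0%N = cst 1)
  (hlam_mono : {homo lambda : a b / (a <= b)%N >-> a <= b})
  (hlam_ge0 : forall k, 0 <= lambda k)
  (hlam_oo : lambda @ \oo --> +oo)
  (n : R) (L : nat) (y : 'I_L -> M) (tau : 'I_L -> R) (A B : R)
  (htau : forall k, 0 < tau k) (hA : 0 < A) (hB : 0 < B)
  (hMZ : forall p, Pspace phi lambda n p ->
     (A%:E * \int[mu]_x ((p x) ^+ 2)%:E <= (\sum_(k < L) `|p (y k)| ^+ 2 * tau k)%:E)%E /\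
     ((\sum_(k < L) `|p (y k)| ^+ 2 * tau k)%:E <= B%:E * \int[mu]_x ((p x) ^+ 2)%:E)%E)
  (f : M -> R) (hf : continuous f)
  (Pnf : M -> R)
  (hPnf : Pspace phi lambda n Pnf /\
     forall p, Pspace phi lambda n p ->
       (\int[mu]_x ((f x - Pnf x) * p x)%:E = 0)%E)
  (q : M -> R)
  (hq : Pspace phi lambda n q /\
     forall p, Pspace phi lambda n p ->
       \sum_(k < L) `|f (y k) - q (y k)| ^+ 2 * tau k
         <= \sum_(k < L) `|f (y k) - p (y k)| ^+ 2 * tau k) :
  (L2norm mu (f \- q)%R <= (Num.sqrt (1 + (B / A) ^+ 2) * supnorm (f \- Pnf)%R)%:E)%E.
Proof.
have [PPnf Pnf_orth] := hPnf; have [Pq q_min] := hq.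
have Pcont : forall p, Pspace phi lambda n p -> continuous p := Pspace_continuous hcont.
set g := f \- Pnf; set s := supnorm g; pose r := q \- Pnf.
have Pr : Pspace phi lambda n r.
  have -> : r = fun x => 1 * q x + (-1) * Pnf x by apply/funext => x; rewrite /r /=; ring.
  exact: Pspace_lin.
have g_cont : continuous g by move=> x; exact: continuousB (hf x) (Pcont _ PPnf x).
have r_cont := Pcont _ Pr.
have g_le x : `|g x| <= s by exact: le_supnorm.
have s_ge0 : 0 <= s := le_trans (normr_ge0 _) (g_le point).
have gr0 : \int[mu]_x (g x * r x) = 0.
  have := Pnf_orth _ Pr; rewrite (continuous_integralE hM) => [[] //|].
  by move=> x; exact: continuousM (g_cont x) (r_cont x).
have wnorm2_r : wnorm2 y tau r <= s ^+ 2 * \sum_(k < L) tau k.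
  have tau_ge0 k : 0 <= tau k := ltW (htau k).
  apply: le_trans (wlsq_wnorm2_le tau_ge0 (@Pspace_lin _ _ phi lambda n) Pq q_min PPnf) _.
  exact: wnorm2_le.
have int_r : \int[mu]_x (r x ^+ 2) <= s ^+ 2 * (B / A) ^+ 2.
  have [lambda0_le | n_lt] := leP (lambda 0%N) n.
    exact: (MZ_Rintegral_sqr_le hM hA Pcont hMZ (Pspace_cst1 hphi0 lambda0_le) Pr wnorm2_r).
  rewrite (Pspace_eq0 hlam_mono n_lt Pr) /cst expr0n Rintegral_cst_probability.
  by rewrite mulr_ge0 ?sqr_ge0.
have -> : f \- q = g \- r by apply/funext => x; rewrite /g /r /=; ring.
apply: L2norm_le => //; first by move=> x; exact: continuousB (g_cont x) (r_cont x).
rewrite mulr_ge0 ?sqrtr_ge0 //.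
rewrite Rintegral_sqrB_orthogonal // exprMn sqr_sqrtr ?addr_ge0 ?sqr_ge0 // mulrDl mul1r.
by rewrite mulrC lerD // Rintegral_sqr_le.
Qed.
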